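(* Let $k\ge1$, $n\ge0$, $j\ge0$ be integers. The number of $k$-Dyck prefixes with exactly $n+1$ up-steps, whose last step is an up-step, and which end at height $j+k$, equals $$\sum_{0\le m\le j/k}(-1)^m\binom{j-km}{m}\frac1{1+(n-m)(k+1)}\binom{1+(n-m)(k+1)}{n-m}\;-\;(-1)^n\binom{j-1-kn}{n}.$$
   Context: A $k$-Dyck prefix is a lattice path starting at $(0,0)$ with up-steps $(1,k)$ and down-steps $(1,-1)$ that never goes below the $x$-axis; the height of a point is its $y$-coordinate. Binomial conventions: $\binom{a}{b}=0$ if $b<0$; for $a\ge0$, $\binom{a}{b}=0$ if $b>a$; and the term $\binom{j-1-kn}{n}$ is taken to be $0$ when $j-1-kn<0$ (it is the coefficient of $z^nu^{j-1}$ in $1/(1-u+zu^{k+1})$). *)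

From HB Require Import structures.
From mathcomp Require Import all_boot all_order all_algebra.
Set Implicit Arguments. Unset Strict Implicit. Unset Printing Implicit Defensive.
Import Order.TTheory GRing.Theory Num.Theory.
Local Open Scope ring_scope.

Definition height (k : nat) (s : seq bool) : int :=
  \sum_(b <- s) (if b then k%:Z else -1).

Definition is_kDyck_prefix (k : nat) (s : seq bool) : bool :=
  [forall i : 'I_(size s).+1, 0 <= height k (take i s)].

Definition good_path (k n j : nat) (s : seq bool) : bool :=
  [&& is_kDyck_prefix k s,
      count id s == n.+1,
      last false s &
      height k s == (j + k)%:Z].

(* Any such path has n+1 up-steps and at most
   k(n+1) down-steps (height stays >= 0), hence length < (k+1)(n+1)+1;
   we count over all bool sequences of each length below that bound. *)
Definition num_good_paths (k n j : nat) : nat :=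
  (\sum_(m < (k.+1 * n.+1).+1)
     #|[set t : m.-tuple bool | good_path k n j t]|)%N.

(* Binomial coefficient with integer arguments (as a rational), following the
   paper's conventions: 0 if b < 0; 'C(a,b) if a >= 0 (which is 0 if b > a);
   and 0 if a < 0 (the only instance with a < 0 in the statement is the term
   binom(j-1-kn, n), which the paper takes to be 0 when j-1-kn < 0). *)
Definition binz (a b : int) : rat :=
  if b < 0 then 0
  else if a < 0 then 0
  else ('C(`|a|%N, `|b|%N))%:R.

From HB Require Import structures.
From mathcomp Require Import all_boot all_order all_algebra.
From mathcomp Require Import zify ring.
Set Implicit Arguments. Unset Strict Implicit. Unset Printing Implicit Defensive.
Import Order.TTheory GRing.Theory Num.Theory.
Local Open Scope ring_scope.

(* Let a(u, e) be the number of walks with steps +k and -1 that start at height 0,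
   stay nonnegative, use u up-steps and end at height e.  A good path is such a walk
   ending at height j followed by one up-step, so it is counted by a(n, j).  Removing
   the last step gives a(u+1, e) = a(u+1, e+1) + a(u, e-k) for e >= 0, while
   a(u, e) = 0 for e < 0 and a(0, e) = [e = 0].  The boundary values a(u, 0) are the
   Fuss-Catalan numbers: decomposing by the first step, the walks from height h down
   to 0 are counted by the ballot numbers (h+1)/N * C(N, u), N = (k+1)u + h + 1.
   By Pascal's rule the right-hand side, read as a function of an integer j, obeys the
   same recurrence and boundary values, so the two agree by induction on n and j. *)

Lemma big_nat_widen_idx (R : Type) (idx : R) (op : Monoid.law idx) (F : nat -> R) (A B : nat) :
  (A <= B)%N -> (forall m, (A <= m < B)%N -> F m = idx) ->
  \big[op/idx]_(0 <= m < A) F m = \big[op/idx]_(0 <= m < B) F m.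
Proof.
move=> le_AB F_idx; rewrite (big_cat_nat (leq0n A) le_AB) [X in op _ X]big_nat_cond.
by rewrite [X in op _ X]big1 ?Monoid.mulm1 // => m /andP [/F_idx].
Qed.

Lemma binS_pred n m : 'C(n.+1, m) = ('C(n, m) + 'C(n, m.-1) * (0 < m))%N.
Proof. by case: m => [|m]; rewrite ?bin0 ?muln0 ?binS ?muln1. Qed.

Lemma addr_eq_subl (V : zmodType) (x y z : V) : (x + y == z) = (y == z - x).
Proof. by rewrite [y == _]eq_sym subr_eq addrC eq_sym. Qed.

Lemma addr_eq_subr (V : zmodType) (x y z : V) : (y + x == z) = (y == z - x).
Proof. by rewrite [y == _]eq_sym subr_eq eq_sym. Qed.

Fixpoint bool_seqs (m : nat) : seq (seq bool) :=
  if m is m'.+1 then [seq true :: s | s <- bool_seqs m'] ++ [seq false :: s | s <- bool_seqs m']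
  else [:: [::]].

Lemma mem_bool_seqs m s : (s \in bool_seqs m) = (size s == m).
Proof.
have mem_cons c b t L : (b :: t \in [seq c :: s | s <- L]) = (b == c) && (t \in L).
  by apply/mapP/andP => [[t' t'L [-> ->]] | [/eqP -> tL]]; [split | exists t].
elim: m s => [|m IH] [|b s] //=; rewrite mem_cat.
  by apply/negbTE; rewrite negb_or; apply/andP; split; apply/mapP => -[].
by rewrite !mem_cons IH; case: b; rewrite /= ?orbF.
Qed.

Lemma uniq_bool_seqs m : uniq (bool_seqs m).
Proof.
elim: m => //= m IH; rewrite cat_uniq !map_inj_uniq ?IH; try by move=> s t [].
by rewrite /= andbT; apply/hasPn => _ /mapP [s _ ->]; apply/mapP => -[t _ []].
Qed.

Lemma count_bool_seqs_cons m (P : pred (seq bool)) :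
  count P (bool_seqs m.+1) =
  (count (fun s => P (true :: s)) (bool_seqs m)
   + count (fun s => P (false :: s)) (bool_seqs m))%N.
Proof. by rewrite /= count_cat !count_map. Qed.

Lemma count_bool_seqs_rcons m (P : pred (seq bool)) :
  count P (bool_seqs m.+1) =
  (count (fun s => P (rcons s true)) (bool_seqs m)
   + count (fun s => P (rcons s false)) (bool_seqs m))%N.
Proof.
pose L b := [seq rcons s b | s <- bool_seqs m].
suff /permP -> : perm_eq (bool_seqs m.+1) (L true ++ L false) by rewrite count_cat !count_map.
apply: uniq_perm; first exact: uniq_bool_seqs.
  rewrite cat_uniq !map_inj_uniq ?uniq_bool_seqs //= ?andbT; try exact: rcons_injl.
  apply/hasPn => _ /mapP [s _ ->]; apply/mapP => -[t _] /(congr1 (last false)).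
  by rewrite !last_rcons.
move=> t; rewrite mem_bool_seqs mem_cat; apply/eqP/orP => [|]; last first.
  by case=> /mapP [s + ->]; rewrite size_rcons mem_bool_seqs => /eqP ->.
case/lastP: t => [|s b] //; rewrite size_rcons => -[sm].
by case: b; [left | right]; apply: map_f; rewrite mem_bool_seqs sm.
Qed.

Lemma card_bool_tuples m (P : pred (seq bool)) :
  #|[set t : m.-tuple bool | P t]| = count P (bool_seqs m).
Proof.
have perm_enum : perm_eq (bool_seqs m) [seq val t | t <- enum {: m.-tuple bool}].
  apply: uniq_perm; rewrite ?uniq_bool_seqs ?(map_inj_uniq val_inj) ?enum_uniq // => s.
  rewrite mem_bool_seqs; apply/eqP/mapP => [<- | [t _ ->]]; last exact: size_tuple.
  by exists (in_tuple s); rewrite ?mem_enum.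
rewrite (permP perm_enum) count_map enumT cardsE cardE /enum_mem size_filter.
by apply: eq_count => t; rewrite inE.
Qed.

Section Walks.
Variable k : nat.

Definition step (b : bool) : int := if b then k%:Z else -1.

Lemma height_nil : height k [::] = 0.
Proof. by rewrite /height big_nil. Qed.

Lemma height_cons b s : height k (b :: s) = step b + height k s.
Proof. by rewrite /height big_cons. Qed.

Lemma height_rcons s b : height k (rcons s b) = height k s + step b.
Proof. by rewrite /height -cats1 big_cat big_seq1. Qed.

Lemma size_add_height s : (size s)%:Z + height k s = (k.+1 * count id s)%N%:Z.
Proof.
elim: s => [|b s IH]; first by rewrite height_nil muln0.
by rewrite height_cons; move: IH; case: b => /=; lia.
Qed.

Fixpoint nonneg_from (c : int) (s : seq bool) : bool :=
  if s is b :: s' then (0 <= c) && nonneg_from (c + step b) s' else 0 <= c.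

Lemma nonneg_fromE c s :
  nonneg_from c s = all (fun i => 0 <= c + height k (take i s)) (iota 0 (size s).+1).
Proof.
elim: s c => [|b s IH] c; first by rewrite /= height_nil addr0 andbT.
have -> : iota 0 (size (b :: s)).+1 = 0%N :: map (addn 1) (iota 0 (size s).+1).
  by rewrite -iotaDl.
rewrite [nonneg_from _ _]/= IH; move: (iota 0 _) => L /=.
rewrite all_map height_nil addr0; congr (_ && _); apply: eq_all => i /=.
by rewrite height_cons addrA.
Qed.

Lemma is_kDyck_prefixE s : is_kDyck_prefix k s = nonneg_from 0 s.
Proof.
rewrite nonneg_fromE; apply/forallP/allP => [prefix_ge0 i | prefix_ge0 i].
  by rewrite mem_iota add0n add0r => lt_i; apply: (prefix_ge0 (Ordinal lt_i)).
by have := prefix_ge0 i; rewrite mem_iota add0n ltn_ord add0r; apply.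
Qed.

Lemma nonneg_from_rcons c s b :
  nonneg_from c (rcons s b) = nonneg_from c s && (0 <= c + height k (rcons s b)).
Proof.
elim: s c => [|a s IH] c /=; first by rewrite height_cons height_nil addr0.
by rewrite IH height_cons height_rcons andbA !addrA.
Qed.

Lemma nonneg_from_ge0 c s : nonneg_from c s -> 0 <= c.
Proof. by case: s => [|b s] //= /andP []. Qed.

Lemma nonneg_from_end c s : nonneg_from c s -> 0 <= c + height k s.
Proof.
elim: s c => [|b s IH] c /=; first by rewrite height_nil addr0.
by case/andP=> _ /IH; rewrite height_cons addrA.
Qed.

Definition npaths (c : int) (m u : nat) (e : int) : nat :=
  count (fun s => [&& nonneg_from c s, count id s == u & height k s == e]) (bool_seqs m).

Lemma npaths0 c u e : npaths c 0 u e = [&& 0 <= c, u == 0%N & e == 0].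
Proof. by rewrite /npaths /= height_nil addn0 (eq_sym 0%N) (eq_sym 0). Qed.

Lemma npaths_neq0 c m u e : npaths c m u e != 0%N ->
  [/\ 0 <= c, 0 <= c + e & m%:Z + e = (k.+1 * u)%N%:Z].
Proof.
rewrite -lt0n -has_count => /hasP [s]; rewrite mem_bool_seqs => /eqP <-.
case/and3P => s_ge0 /eqP <- /eqP <-.
by rewrite size_add_height (nonneg_from_ge0 s_ge0) nonneg_from_end.
Qed.

Lemma npaths_start_neg c m u e : c < 0 -> npaths c m u e = 0%N.
Proof.
by move=> c_lt0; apply/eqP; apply: contraLR c_lt0 => /npaths_neq0 [c_ge0 _ _]; rewrite -leNgt.
Qed.

Lemma npaths_end_neg c m u e : c + e < 0 -> npaths c m u e = 0%N.
Proof.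
by move=> ce_lt0; apply/eqP; apply: contraLR ce_lt0 => /npaths_neq0 [_ ce_ge0 _]; rewrite -leNgt.
Qed.

Lemma npaths_first c m u e : 0 <= c ->
  npaths c m.+1 u e =
  ((if u is u'.+1 then npaths (c + k%:Z) m u' (e - k%:Z) else 0)
   + npaths (c - 1) m u (e + 1))%N.
Proof.
move=> c_ge0; rewrite /npaths count_bool_seqs_cons /= c_ge0; congr (_ + _)%N.
  case: u => [|u]; last first.
    by apply: eq_count => s; rewrite height_cons add1n eqSS addr_eq_subl.
  by rewrite (@eq_count _ _ pred0) ?count_pred0 // => s; rewrite /= andbF.
by apply: eq_count => s; rewrite height_cons add0n addr_eq_subl opprK.
Qed.

Lemma npaths_last c m u e : 0 <= c + e ->
  npaths c m.+1 u.+1 e = (npaths c m u (e - k%:Z) + npaths c m u.+1 (e + 1))%N.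
Proof.
move=> ce_ge0; rewrite /npaths count_bool_seqs_rcons.
congr (_ + _)%N; apply: eq_count => s;
  rewrite nonneg_from_rcons height_rcons -cats1 count_cat /=;
  rewrite ?addn1 ?addn0 ?eqSS addr_eq_subr ?opprK;
  by case: (height k s =P _) => [-> | _]; rewrite ?andbF // ?subrK ?addrK ce_ge0 andbT.
Qed.

(* The ballot number [(h + 1) / N * 'C(N, u)], written without division. *)
Definition ballot (u h : nat) : int :=
  let N := (k.+1 * u + h).+1 in
  'C(N, u)%:Z - (k.+1 * 'C(N.-1, u.-1) * (0 < u))%N%:Z.

Lemma ballot0 h : ballot 0 h = 1.
Proof. by rewrite /ballot /= bin0 muln0 subr0. Qed.

Lemma ballotS u h :
  ballot u.+1 h = ballot u (h + k) + (if h is h'.+1 then ballot u.+1 h' else 0).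
Proof.
rewrite /ballot !succnK ltn0Sn !muln1; case: h => [|h].
  set L := (k.+1 * u.+1)%N.
  have L_pos : L = L.-1.+1 by rewrite /L mulSn.
  have -> : (k.+1 * u + (0 + k))%N = L.-1 by rewrite /L mulnS; lia.
  have diag : 'C(L, u.+1) = (k.+1 * 'C(L.-1, u))%N.
    apply/eqP; rewrite -(eqn_pmul2l (ltn0Sn u)) -mul_bin_diag {1}/L.
    by rewrite mulnA [(u.+1 * _)%N]mulnC.
  have pascal : 'C(L, u) = ('C(L.-1, u) + 'C(L.-1, u.-1) * (0 < u))%N.
    by rewrite {1}L_pos binS_pred.
  by rewrite addn0 addr0 binS diag pascal !PoszD !PoszM; ring.
set M := (k.+1 * u.+1 + h)%N.
have -> : (k.+1 * u.+1 + h.+1 = M.+1)%N by rewrite /M addnS.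
have -> : (k.+1 * u + (h.+1 + k) = M)%N by rewrite /M mulnS; lia.
by rewrite binS (binS_pred M u) succnK muln1 !PoszD !PoszM; ring.
Qed.

Lemma npaths_to_ground m h u :
  (npaths h%:Z m u (- h%:Z))%:Z = if m == (k.+1 * u + h)%N then ballot u h else 0.
Proof.
elim: m h u => [|m IH] h u.
  by rewrite npaths0; case: u => [|u]; case: h => [|h]; rewrite ?muln0 ?ballot0.
have down (x : nat) : (x.+1%:Z - 1 = x%:Z) * (- x.+1%:Z + 1 = - x%:Z) by split; lia.
have up (x : nat) : (x%:Z + k%:Z = (x + k)%N%:Z) * (- x%:Z - k%:Z = - (x + k)%N%:Z) by split; lia.
rewrite npaths_first //; case: u => [|u]; case: h => [|h].
- by rewrite npaths_start_neg // muln0.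
- by rewrite !down IH !muln0 !add0n eqSS; case: (m == h); rewrite ?ballot0.
- rewrite [npaths (_ - 1) _ _ _]npaths_start_neg // addn0 !up IH.
  have -> : (m.+1 == k.+1 * u.+1 + 0)%N = (m == k.+1 * u + k)%N.
    by apply/eqP/eqP; rewrite mulnS; lia.
  by rewrite ballotS add0n addr0.
- rewrite PoszD !up !down !IH.
  have -> : (m == k.+1 * u + (h.+1 + k))%N = (m.+1 == k.+1 * u.+1 + h.+1)%N.
    by apply/eqP/eqP; rewrite mulnS; lia.
  have -> : (m == k.+1 * u.+1 + h)%N = (m.+1 == k.+1 * u.+1 + h.+1)%N.
    by apply/eqP/eqP; lia.
  by case: ifP; rewrite ?addr0 // (ballotS u h.+1).
Qed.

Definition nwalks (u : nat) (e : int) : nat :=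
  (\sum_(0 <= m < (k.+1 * u).+1) npaths 0 m u e)%N.

Lemma nwalks_widen B u e : (k.+1 * u < B)%N ->
  (\sum_(0 <= m < B) npaths 0 m u e)%N = nwalks u e.
Proof.
move=> lt_B; symmetry; apply: big_nat_widen_idx => // m /andP [lt_m _].
apply/eqP; apply: contraLR lt_m => /npaths_neq0 [_ e_ge0 size_eq].
by rewrite -leqNgt; lia.
Qed.

Lemma nwalks_neg u e : e < 0 -> nwalks u e = 0%N.
Proof. by move=> e_lt0; apply: big1 => m _; rewrite npaths_end_neg ?add0r. Qed.

Lemma nwalks0 e : nwalks 0 e = (e == 0).
Proof. by rewrite /nwalks muln0 big_nat1 npaths0. Qed.

Lemma nwalksS u e : 0 <= e -> nwalks u.+1 e = (nwalks u.+1 (e + 1) + nwalks u (e - k%:Z))%N.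
Proof.
move=> e_ge0; rewrite -(@nwalks_widen (k.+1 * u.+1).+2) // big_nat_recl // npaths0 andbF add0n.
under eq_bigr => m _ do rewrite npaths_last ?add0r //.
by rewrite big_split addnC; congr (_ + _)%N; apply: nwalks_widen; rewrite mulnS; lia.
Qed.

Lemma nwalks_ground u : (nwalks u 0)%:Z = ballot u 0.
Proof.
rewrite /nwalks big_nat_recr //= big1_seq ?add0n.
  by have := npaths_to_ground (k.+1 * u) 0 u; rewrite oppr0 addn0 eqxx.
move=> m /andP [_]; rewrite mem_index_iota => /andP [_ lt_m].
by have := npaths_to_ground m 0 u; rewrite oppr0 addn0 ifN_eq ?ltn_eqF // => -[].
Qed.

Lemma good_path_rcons n j s b : good_path k n j (rcons s b) =
  b && [&& nonneg_from 0 s, count id s == n & height k s == j%:Z].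
Proof.
rewrite /good_path is_kDyck_prefixE nonneg_from_rcons last_rcons height_rcons.
rewrite -cats1 count_cat /= addn0; case: b; rewrite /= ?andbF // addn1 eqSS PoszD.
rewrite (inj_eq (addIr _)); case: (height k s =P j%:Z) => [-> | _]; rewrite ?andbF //.
by rewrite add0r -PoszD le0z_nat !andbT.
Qed.

Lemma num_good_pathsE n j : num_good_paths k n j = nwalks n j%:Z.
Proof.
rewrite /num_good_paths; under eq_bigr => m _ do rewrite card_bool_tuples.
rewrite -(big_mkord xpredT (fun m => count (good_path k n j) (bool_seqs m))) big_nat_recl //.
rewrite [count _ (bool_seqs 0)]/= {1}/good_path !andbF add0n.
rewrite -(@nwalks_widen (k.+1 * n.+1)); last by rewrite mulnS; lia.
apply: eq_bigr => m _; rewrite count_bool_seqs_rcons.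
rewrite [X in (_ + X)%N](@eq_count _ _ pred0) ?count_pred0 ?addn0 => [|s].
  by apply: eq_count => s; rewrite good_path_rcons.
by rewrite good_path_rcons.
Qed.

End Walks.

Lemma binz_nat (a b : nat) : binz a b = 'C(a, b)%:R.
Proof. by []. Qed.

Lemma binz_negl a b : a < 0 -> binz a b = 0.
Proof. by rewrite /binz => ->; case: ifP. Qed.

Lemma binz_negr a b : b < 0 -> binz a b = 0.
Proof. by rewrite /binz => ->. Qed.

Lemma binz0 a : binz a 0 = (0 <= a)%R%:R.
Proof. by case: a => [a|a] //=; rewrite binz_nat bin0. Qed.

Lemma binzS (a : int) (m : nat) : binz (a + 1) m.+1 = binz a m.+1 + binz a m.
Proof.
case: a => [a|[|a]].
- by rewrite -PoszD addn1 !binz_nat binS natrD addrC.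
- by rewrite binz_nat !binz_negl ?addr0 // bin0n.
- by rewrite !binz_negl ?addr0 // NegzE; lia.
Qed.

Section Formula.
Variable k : nat.
Hypothesis k_gt0 : (0 < k)%N.

Definition fuss (d : nat) : rat := (ballot k d 0)%:~R.

Lemma fuss_closed d : fuss d = ((k.+1 * d).+1)%:R^-1 * 'C((k.+1 * d).+1, d)%:R.
Proof.
set N := (k.+1 * d).+1.
have binN : 'C(N, d)%:Z = N%:Z * ballot k d 0.
  rewrite /ballot addn0 -/N; case: d => [|d] in N *; rewrite /N.
    by rewrite !muln0 subr0 mulr1.
  rewrite ltn0Sn muln1 mulrBr -!PoszM mulnCA mul_bin_diag -addn1.
  by rewrite !PoszM !PoszD; ring.
rewrite /fuss (_ : 'C(N, d)%:R = ('C(N, d)%:Z)%:~R) // binN intrM.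
by rewrite (_ : N%:~R = N%:R :> rat) // mulKf ?pnatr_eq0.
Qed.

Lemma fuss_term n m :
  (1 + (n%:Z - m%:Z) * (k.+1)%:Z)%:~R^-1 * binz (1 + (n%:Z - m%:Z) * (k.+1)%:Z) (n%:Z - m%:Z)
  = if (m <= n)%N then fuss (n - m) else 0 :> rat.
Proof.
case: leqP => [le_mn | lt_nm]; last by rewrite binz_negr ?mulr0 //; lia.
have -> : n%:Z - m%:Z = (n - m)%N%:Z by lia.
have -> : 1 + (n - m)%N%:Z * k.+1%:Z = ((k.+1 * (n - m)).+1)%N%:Z by lia.
by rewrite binz_nat fuss_closed.
Qed.

Definition fuss_sum (n : nat) (j : int) : rat :=
  \sum_(0 <= m < n.+1) (-1) ^+ m * binz (j - (k * m)%:Z) m%:Z * fuss (n - m).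

Definition tail_term (n : nat) (j : int) : rat :=
  (-1) ^+ n * binz (j - 1 - (k * n)%:Z) n%:Z.

Definition formula (n : nat) (j : int) : rat := fuss_sum n j - tail_term n j.

Lemma fuss_sumS n j : 0 <= j ->
  fuss_sum n.+1 (j + 1) = fuss_sum n.+1 j - fuss_sum n (j - k%:Z).
Proof.
move=> j_ge0; rewrite /fuss_sum big_nat_recl // [X in _ = X - _]big_nat_recl //.
rewrite !muln0 !subr0 !binz0 j_ge0 (_ : 0 <= j + 1) ?addr_ge0 // -addrA.
congr (_ + _); rewrite -sumrB; apply: eq_bigr => m _.
have -> : j + 1 - (k * m.+1)%:Z = (j - (k * m.+1)%:Z) + 1 by ring.
have -> : j - k%:Z - (k * m)%:Z = j - (k * m.+1)%:Z by rewrite mulnS PoszD; ring.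
by rewrite subSS binzS exprS; ring.
Qed.

Lemma tail_termS n j : tail_term n.+1 (j + 1) = tail_term n.+1 j - tail_term n (j - k%:Z).
Proof.
rewrite /tail_term.
have -> : j + 1 - 1 - (k * n.+1)%:Z = (j - 1 - (k * n.+1)%:Z) + 1 by ring.
have -> : j - k%:Z - 1 - (k * n)%:Z = j - 1 - (k * n.+1)%:Z by rewrite mulnS PoszD; ring.
by rewrite binzS exprS; ring.
Qed.

Lemma formulaS n j : 0 <= j -> formula n.+1 (j + 1) = formula n.+1 j - formula n (j - k%:Z).
Proof. by move=> j_ge0; rewrite /formula fuss_sumS // tail_termS; ring. Qed.

Lemma formula_neg n j : j < 0 -> formula n j = 0.
Proof.
move=> j_lt0; rewrite /formula /tail_term binz_negl ?mulr0 ?subr0; last by lia.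
by rewrite /fuss_sum big1 // => m _; rewrite binz_negl ?mulr0 ?mul0r //; lia.
Qed.

Lemma formula0 j : 0 <= j -> formula 0 j = (j == 0)%R%:R.
Proof.
move=> j_ge0; rewrite /formula /fuss_sum /tail_term big_nat1 !expr0 !mul1r muln0 !subr0.
rewrite subn0 /fuss ballot0 mulr1 !binz0 j_ge0.
by case: j j_ge0 => [[|j]|j].
Qed.

Lemma formula_ground n : formula n 0 = fuss n.
Proof.
rewrite /formula /fuss_sum /tail_term big_nat_recl // muln0 subr0 binz0 subn0.
rewrite big1 => [|m _]; last by rewrite binz_negl ?mulr0 ?mul0r //; lia.
by rewrite binz_negl ?mulr0 ?subr0 ?expr0 ?mul1r ?addr0 //; lia.
Qed.

Lemma nwalks_formula n j : (nwalks k n j)%:R = formula n j.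
Proof.
elim: n j => [|n IHn] j.
  case: (ltrP j 0) => [j_lt0 | j_ge0]; first by rewrite nwalks_neg // formula_neg.
  by rewrite nwalks0 formula0.
case: (ltrP j 0) => [j_lt0 | j_ge0]; first by rewrite nwalks_neg // formula_neg.
case: j j_ge0 => // j _; elim: j => [|j IHj].
  by rewrite formula_ground // /fuss -nwalks_ground.
by rewrite -[j.+1]addn1 PoszD formulaS // -IHj -IHn (@nwalksS k n j) // natrD addrK.
Qed.

End Formula.

Theorem mainTheorem3 (k n j : nat) (hk : (1 <= k)%N) :
  (num_good_paths k n j)%:R =
    \sum_(0 <= m < (j %/ k).+1)
       (-1) ^+ m * binz (j%:Z - (k * m)%:Z) m%:Z
       * (1 + (n%:Z - m%:Z) * (k.+1)%:Z)%:~R^-1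
       * binz (1 + (n%:Z - m%:Z) * (k.+1)%:Z) (n%:Z - m%:Z)
    - (-1) ^+ n * binz (j%:Z - 1 - (k * n)%:Z) n%:Z :> rat.
Proof.
rewrite num_good_pathsE (nwalks_formula hk) /formula /tail_term; congr (_ - _).
pose g m := (-1) ^+ m * binz (j%:Z - (k * m)%:Z) m%:Z * if (m <= n)%N then fuss k (n - m) else 0.
set B := (n + j %/ k).+1.
have sum_gE A : (A <= B)%N -> (n < A)%N || (j %/ k < A)%N ->
    \sum_(0 <= m < A) g m = \sum_(0 <= m < B) g m.
  move=> le_AB A_out; apply: big_nat_widen_idx => // m /andP [le_Am _].
  case/orP: A_out => [lt_nA | lt_jA].
    by rewrite /g leqNgt (leq_trans lt_nA le_Am) mulr0.
  have lt_jm : (j < k * m)%N by rewrite mulnC -ltn_divLR // (leq_trans lt_jA le_Am).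
  by rewrite /g binz_negl ?mulr0 ?mul0r //; lia.
transitivity (\sum_(0 <= m < B) g m).
  rewrite -(sum_gE n.+1) ?ltnSn ?ltnS ?leq_addr //.
  by apply: eq_big_nat => m /andP [_ lt_m]; rewrite /g -ltnS lt_m.
rewrite -(sum_gE (j %/ k).+1) ?ltnSn ?orbT ?ltnS ?leq_addl //.
by apply: eq_bigr => m _; rewrite -mulrA fuss_term.
Qed.
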